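(* For the conditions (i)–(v) of the context, (i) $\Longleftrightarrow$ (ii) $\Longrightarrow$ (iii) $\Longrightarrow$ (iv) $\Longrightarrow$ (v).
   Context: $X$ is a finite-dimensional real Hilbert space with norm $\|\cdot\|$, $T:X\rightrightarrows X$ is a maximal monotone operator, $\Omega:=T^{-1}(0)$, $\mathbb{B}$ is the closed unit ball, $\mathbb{B}(z;r)$ the closed ball of radius $r$ about $z$, $\operatorname{dist}(0,\emptyset)=+\infty$. Conditions: (i) there exist $r>0,\kappa_r>0$ with $\operatorname{dist}(z,\Omega)\le\kappa_r\|w\|$ for all $w\in\mathbb{B}(0;r)$ and $z\in T^{-1}(w)$; (ii) there exist $r>0,\kappa_r>0$ with $T^{-1}(w)\subset T^{-1}(0)+\kappa_r\|w\|\mathbb{B}$ for all $w\in\mathbb{B}(0;r)$; (iii) for every $r>0$ there exists $\kappa_r>0$ with $\operatorname{dist}(z,\Omega)\le\kappa_r\operatorname{dist}(0,T(z))$ for all $z$ with $\operatorname{dist}(z,\Omega)\le r$; (iv) for every $r>0$ there exists $\kappa_r>0$ with $\operatorname{dist}(z,\Omega)\le\kappa_r\operatorname{dist}(0,T(z))$ for all $z$ with $\|z\|\le r$; (v) there exist $\bar z\in\Omega$, $r>0$, $\kappa_r>0$ with $\operatorname{dist}(z,\Omega)\le\kappa_r\operatorname{dist}(0,T(z))$ for all $z\in\mathbb{B}(\bar z;r)$. *)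

From HB Require Import structures.
From mathcomp Require Import all_boot all_order all_algebra.
From mathcomp Require Import all_classical all_reals.
From mathcomp Require Import ereal.
Set Implicit Arguments. Unset Strict Implicit. Unset Printing Implicit Defensive.
Import Order.TTheory GRing.Theory Num.Theory.
Local Open Scope classical_set_scope.
Local Open Scope ring_scope.

(* A finite-dimensional real Hilbert space is modelled as a finite-dimensional
   real vector space X : vectType R together with an inner product. *)
Definition is_inner_product (R : realType) (X : vectType R)
  (ip : X -> X -> R) : Prop :=
  [/\ (forall a x y z, ip (a *: x + y) z = a * ip x z + ip y z),
      (forall x y, ip x y = ip y x) &
      (forall x, x != 0 -> 0 < ip x x)].

Section Defs.
Variables (R : realType) (X : vectType R) (ip : X -> X -> R).

Definition ipnorm (x : X) : R := Num.sqrt (ip x x).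

(* dist(z, S) in the extended reals; dist(z, emptyset) = +oo *)
Definition dist (z : X) (S : set X) : \bar R :=
  ereal_inf [set ((ipnorm (z - w))%:E) | w in S].

Definition monotone (T : X -> set X) : Prop :=
  forall x y u v, T x u -> T y v -> 0 <= ip (x - y) (u - v).

Definition maximal_monotone (T : X -> set X) : Prop :=
  monotone T /\
  forall x u, (forall y v, T y v -> 0 <= ip (x - y) (u - v)) -> T x u.

Definition inv_op (T : X -> set X) (w : X) : set X := [set z | T z w].

Definition zeros (T : X -> set X) : set X := inv_op T 0.

Definition cond_i (T : X -> set X) : Prop :=
  exists r, exists kr, [/\ 0 < r, 0 < kr &
    forall w z, ipnorm w <= r -> inv_op T w z ->
      (dist z (zeros T) <= (kr * ipnorm w)%:E)%E].

Definition cond_ii (T : X -> set X) : Prop :=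
  exists r, exists kr, [/\ 0 < r, 0 < kr &
    forall w z, ipnorm w <= r -> inv_op T w z ->
      exists om b, [/\ zeros T om, ipnorm b <= kr * ipnorm w & z = om + b]].

Definition cond_iii (T : X -> set X) : Prop :=
  forall r, 0 < r -> exists kr, 0 < kr /\
    forall z, (dist z (zeros T) <= r%:E)%E ->
      (dist z (zeros T) <= kr%:E * dist 0 (T z))%E.

Definition cond_iv (T : X -> set X) : Prop :=
  forall r, 0 < r -> exists kr, 0 < kr /\
    forall z, ipnorm z <= r ->
      (dist z (zeros T) <= kr%:E * dist 0 (T z))%E.

Definition cond_v (T : X -> set X) : Prop :=
  exists zbar, exists r, exists kr, [/\ zeros T zbar, 0 < r, 0 < kr &
    forall z, ipnorm (z - zbar) <= r ->
      (dist z (zeros T) <= kr%:E * dist 0 (T z))%E].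

End Defs.

From HB Require Import structures.
From mathcomp Require Import all_boot all_order all_algebra.
From mathcomp Require Import all_classical all_reals.
From mathcomp Require Import ereal.
From mathcomp Require Import lra.
Import Order.TTheory GRing.Theory Num.Theory.
Local Open Scope classical_set_scope.
Local Open Scope ring_scope.

(* The local bound (i) and the decomposition (ii) say the same thing: the
   infimum defining dist(z, Omega) need not be attained, but doubling the
   constant leaves room to pick an almost nearest zero.  For (iii), split the
   w in T z by size: if |w| <= r0 then (i) applies, and otherwise
   dist(z, Omega) <= r <= (r / r0) |w|, so max(k, r / r0) works on the tube
   dist(z, Omega) <= r.  Balls about the origin lie in such tubes, and small
   balls about a zero lie in balls about the origin, by the parallelogram bound
   |a - b|^2 <= 2 |a|^2 + 2 |b|^2. *)

Section InnerProduct.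
Context {R : realType} {X : vectType R} {ip : X -> X -> R}.
Hypothesis ip_inner : is_inner_product ip.

Lemma ipDl x y z : ip (x + y) z = ip x z + ip y z.
Proof. by case: ip_inner => lin _ _; have := lin 1 x y z; rewrite scale1r mul1r. Qed.

Lemma ip0l z : ip 0 z = 0.
Proof. by apply: (addrI (ip 0 z)); rewrite -ipDl !addr0. Qed.

Lemma ipNl x z : ip (- x) z = - ip x z.
Proof.
by case: ip_inner => lin _ _; have := lin (-1) x 0 z; rewrite scaleN1r addr0 ip0l addr0 mulN1r.
Qed.

Lemma ipDr x y z : ip z (x + y) = ip z x + ip z y.
Proof. by case: ip_inner => _ sym _; rewrite sym ipDl (sym x) (sym y). Qed.

Lemma ipNr x z : ip z (- x) = - ip z x.
Proof. by case: ip_inner => _ sym _; rewrite sym ipNl sym. Qed.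

Lemma ip_ge0 x : 0 <= ip x x.
Proof.
case: ip_inner => _ _ pos; have [->|/pos/ltW //] := eqVneq x 0.
by rewrite ip0l.
Qed.

Lemma ipnorm0 : ipnorm ip 0 = 0.
Proof. by rewrite /ipnorm ip0l sqrtr0. Qed.

Lemma ipnorm_ge0 x : 0 <= ipnorm ip x.
Proof. exact: sqrtr_ge0. Qed.

Lemma ipnorm_gt0 x : x != 0 -> 0 < ipnorm ip x.
Proof. by case: ip_inner => _ _ pos /pos; rewrite sqrtr_gt0. Qed.

Lemma ipnormN x : ipnorm ip (- x) = ipnorm ip x.
Proof. by rewrite /ipnorm ipNl ipNr opprK. Qed.

Lemma ipnorm_sqr x : ipnorm ip x ^+ 2 = ip x x.
Proof. exact: sqr_sqrtr (ip_ge0 x). Qed.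

Lemma ip_parallelogram a b :
  ip (a - b) (a - b) + ip (a + b) (a + b) = 2 * ip a a + 2 * ip b b.
Proof.
rewrite !ipDl !ipDr !ipNl !ipNr.
by case: ip_inner => _ sym _; rewrite (sym b a); lra.
Qed.

Lemma ipnorm_subr_le a b r : ipnorm ip a <= r ->
  ipnorm ip (a - b) <= Num.sqrt (2 * r ^+ 2 + 2 * ipnorm ip b ^+ 2).
Proof.
move=> le_a_r; rewrite -(ger0_norm (ipnorm_ge0 (a - b))) -sqrtr_sqr.
apply: ler_wsqrtr; rewrite !ipnorm_sqr.
have : ip a a <= r ^+ 2.
  by rewrite -ipnorm_sqr lerXn2r ?nnegrE ?ipnorm_ge0 // (le_trans (ipnorm_ge0 a)).
have := ip_parallelogram a b; have := ip_ge0 (a + b); lra.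
Qed.

Lemma dist_le z (S : set X) w : S w -> (dist ip z S <= (ipnorm ip (z - w))%:E)%E.
Proof. by move=> Sw; apply: ereal_inf_lbound; exists w. Qed.

Lemma dist_lt z (S : set X) d : (dist ip z S < d%:E)%E ->
  exists2 w, S w & ipnorm ip (z - w) < d.
Proof. by case/ereal_inf_lt => _ [w Sw <-]; rewrite lte_fin; exists w. Qed.

Lemma le_scale_dist0 (S : set X) (d : \bar R) k : 0 < k ->
  (forall w, S w -> (d <= (k * ipnorm ip w)%:E)%E) ->
  (d <= k%:E * dist ip 0 S)%E.
Proof.
move=> k_gt0 le_d; case: d le_d => [d | | _]; last exact: leNye.
- move=> le_d; rewrite -lee_pdivrMl // -EFinM; apply/ereal_infP => _ [w Sw <-].
  by rewrite sub0r ipnormN lee_fin ler_pdivrMl // -lee_fin le_d.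
- have [S0 _|/set0P[w Sw] /(_ w Sw)] := eqVneq S set0; last by rewrite leye_eq.
  by rewrite S0 /dist image_set0 ereal_inf0 mulry gtr0_sg // mul1e.
Qed.

End InnerProduct.

Section ErrorBounds.
Variables (R : realType) (X : vectType R) (ip : X -> X -> R) (T : X -> set X).
Hypothesis ip_inner : is_inner_product ip.

Lemma cond_i_ii : cond_i ip T -> cond_ii ip T.
Proof.
case=> r [k [r_gt0 k_gt0 err]]; exists r, (2 * k); split; rewrite ?mulr_gt0 //.
move=> w z le_w_r Tzw; have [w0 | w_neq0] := eqVneq w 0.
  by move: Tzw; rewrite w0 => Tz0; exists z, 0; rewrite ipnorm0 // mulr0 addr0.
have w_gt0 : 0 < ipnorm ip w by exact: ipnorm_gt0.
have [om Zom lt_om] : exists2 om, zeros T om & ipnorm ip (z - om) < 2 * k * ipnorm ip w.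
  apply: dist_lt; apply: le_lt_trans (err _ _ le_w_r Tzw) _.
  by rewrite lte_fin ltr_pM2r // ltr_pMl // ltr1n.
by exists om, (z - om); split; rewrite ?(ltW lt_om) // addrC subrK.
Qed.

Lemma cond_ii_i : cond_ii ip T -> cond_i ip T.
Proof.
case=> r [k [r_gt0 k_gt0 decomp]]; exists r, k; split => // w z le_w_r Tzw.
have [om [b [Zom le_b ->]]] := decomp w z le_w_r Tzw.
by apply: le_trans (dist_le _ _ _ Zom) _; rewrite (addrC om) addrK lee_fin.
Qed.

Lemma cond_i_iii : cond_i ip T -> cond_iii ip T.
Proof.
case=> r0 [k0 [r0_gt0 k0_gt0 err]] r r_gt0.
have kr_gt0 : 0 < Num.max k0 (r / r0) by rewrite lt_max k0_gt0.
exists (Num.max k0 (r / r0)); split => // z le_dist_r.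
apply: le_scale_dist0 => // w Tzw.
have [le_w_r0 | lt_r0_w] := leP (ipnorm ip w) r0.
  apply: le_trans (err _ _ le_w_r0 Tzw) _.
  by rewrite lee_fin ler_wpM2r ?ipnorm_ge0 // le_max lexx.
apply: le_trans le_dist_r _; rewrite lee_fin.
apply: (@le_trans _ _ (r / r0 * ipnorm ip w)).
  by rewrite mulrAC ler_pdivlMr // ler_pM2l // ltW.
by rewrite ler_wpM2r ?ipnorm_ge0 // le_max lexx orbT.
Qed.

Lemma cond_iii_iv : zeros T !=set0 -> cond_iii ip T -> cond_iv ip T.
Proof.
move=> [om Zom] err r r_gt0.
have [|k [k_gt0 err_k]] := err (Num.sqrt (2 * r ^+ 2 + 2 * ipnorm ip om ^+ 2)).
  by rewrite sqrtr_gt0 ltr_wpDr ?mulr_ge0 ?sqr_ge0 ?ipnorm_ge0 // mulr_gt0 // exprn_gt0.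
exists k; split => // z le_z_r; apply: err_k.
by apply: le_trans (dist_le _ _ _ Zom) _; rewrite lee_fin ipnorm_subr_le.
Qed.

Lemma cond_iv_v : zeros T !=set0 -> cond_iv ip T -> cond_v ip T.
Proof.
move=> [om Zom] err.
have [|k [k_gt0 err_k]] := err (Num.sqrt (2 * 1 ^+ 2 + 2 * ipnorm ip (- om) ^+ 2)).
  by rewrite sqrtr_gt0 ltr_wpDr ?mulr_ge0 ?sqr_ge0 ?ipnorm_ge0 // mulr_gt0 // exprn_gt0.
exists om, 1, k; split => // z le_z_1; apply: err_k.
have -> : z = z - om - (- om) by rewrite opprK subrK.
exact: ipnorm_subr_le.
Qed.

End ErrorBounds.

Theorem lemma1 (R : realType) (X : vectType R) (ip : X -> X -> R)
  (T : X -> set X) :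
  is_inner_product ip ->
  maximal_monotone ip T ->
  zeros T !=set0 ->
  [/\ (cond_i ip T <-> cond_ii ip T),
      (cond_ii ip T -> cond_iii ip T),
      (cond_iii ip T -> cond_iv ip T) &
      (cond_iv ip T -> cond_v ip T)].
Proof.
move=> ip_inner _ zeros_neq0; split.
- by split; [exact: cond_i_ii | exact: cond_ii_i].
- by move=> /cond_ii_i; exact: cond_i_iii.
- exact: cond_iii_iv.
- exact: cond_iv_v.
Qed.
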